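(* Let $G$ be a finite GVZ-group with $|\mathrm{cd}(G)|=2$. Let $N$ be a normal subgroup of $G$ such that $G'\not\subseteq N$ and $[Z(\chi),G]\subseteq N$ for some $\chi\in\mathrm{nl}(G)$. Then $Z(G/N)=Z(\chi)/N$.
   Context: All groups are finite. $\mathrm{Irr}(G)$ is the set of complex irreducible characters of $G$, $\mathrm{nl}(G)$ the set of non-linear irreducible characters, and $\mathrm{cd}(G)=\{\chi(1):\chi\in\mathrm{Irr}(G)\}$. For a character $\chi$, $Z(\chi)=\{g\in G: |\chi(g)|=\chi(1)\}$. A nonabelian group $G$ is a GVZ-group if for every $\chi\in\mathrm{Irr}(G)$ we have $\chi(g)=0$ for all $g\in G\setminus Z(\chi)$. *)

From mathcomp Require Import all_boot all_order all_algebra all_fingroup all_solvable all_field all_character.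
Set Implicit Arguments. Unset Strict Implicit. Unset Printing Implicit Defensive.
Import GRing.Theory Num.Theory.
Local Open Scope ring_scope.

Definition cd (gT : finGroupType) (G : {group gT}) : seq algC :=
  undup [seq 'chi[G]_i 1%g | i <- enum (Iirr G)].

Definition nonlinear_irr (gT : finGroupType) (G : {group gT}) (i : Iirr G) : bool :=
  ('chi[G]_i 1%g != 1%R).

Definition GVZ (gT : finGroupType) (G : {group gT}) : Prop :=
  ~~ abelian G /\
  forall (i : Iirr G) (g : gT), g \in G -> g \notin ('Z('chi[G]_i))%CF -> 'chi[G]_i g = 0%R.

From mathcomp Require Import all_boot all_order all_algebra all_fingroup all_solvable all_field all_character.
Set Implicit Arguments. Unset Strict Implicit. Unset Printing Implicit Defensive.
Local Open Scope group_scope.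
Local Open Scope ring_scope.
Import Order.TTheory GRing.Theory Num.Theory.

(* Since chi vanishes off Z(chi), chi(1)^2 = |G : Z(chi)|.  Any nonlinear psi
   in Irr(G/N), which exists because G/N is nonabelian, inflates to a nonlinear
   character of G, so psi(1) = chi(1) as cd(G) has only two elements.  Together
   with Z(chi)/N <= Z(G/N) <= Z(psi) this gives
     |G/N : Z(chi)/N| <= |G : Z(chi)| = psi(1)^2 <= |G/N : Z(G/N)|,
   which forces Z(G/N) = Z(chi)/N. *)

Lemma size2_mem_eq (T : eqType) (s : seq T) (x y z : T) :
  size s = 2%N -> x \in s -> y \in s -> z \in s -> x != y -> z != x -> z = y.
Proof.
case: s => [|a [|b [|c s]]] //= _; rewrite !inE.
by move=> /orP[]/eqP-> /orP[]/eqP-> /orP[]/eqP->; rewrite ?eqxx.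
Qed.

Section Degrees.

Variables (gT : finGroupType) (G : {group gT}).

Lemma mem_cd (k : Iirr G) : 'chi_k 1%g \in cd G.
Proof. by rewrite /cd mem_undup; apply: map_f; rewrite mem_enum. Qed.

Lemma cd_size2_nonlinear_eq (i k : Iirr G) :
  size (cd G) = 2%N -> nonlinear_irr i -> nonlinear_irr k ->
  'chi_k 1%g = 'chi_i 1%g.
Proof.
move=> cd2 nl_i nl_k.
apply: (size2_mem_eq cd2 (mem_cd 0) (mem_cd i) (mem_cd k)).
  by rewrite irr0 cfun11 eq_sym.
by rewrite irr0 cfun11.
Qed.

Lemma nonabelian_exists_nonlinear_irr :
  ~~ abelian G -> exists k : Iirr G, nonlinear_irr k.
Proof.
move=> nabG; apply/existsP; rewrite -negb_forall; apply: contra nabG => /forallP lin.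
apply/char_abelianP => k; rewrite qualifE/= irr_char /=; exact: lin.
Qed.

Lemma irr1_sqr_index_cfcenter (i : Iirr G) :
  (forall g, g \in G -> g \notin ('Z('chi_i))%CF -> 'chi_i g = 0) ->
  'chi_i 1%g ^+ 2 = #|G : 'Z('chi_i)%CF|%:R.
Proof.
move=> chi0; apply/eqP; rewrite (irr1_bound i); apply/cfun_onP => g Zg.
by have [/chi0->|/cfun0->] := boolP (g \in G).
Qed.

Lemma irr1_sqr_le_index_center (k : Iirr G) :
  'chi_k 1%g ^+ 2 <= #|G : 'Z(G)|%:R.
Proof.
apply: le_trans (irr1_bound k).1 _; rewrite ler_nat dvdn_leq ?indexg_gt0 //.
rewrite indexgS //= -cap_cfcenter_irr.
exact: (bigcap_inf k (F := fun k => 'Z('chi[G]_k)%CF)).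
Qed.

End Degrees.

Section Subgroups.

Variables (gT : finGroupType) (G H K N : {group gT}).

Lemma index_leq_sub_eq :
  H \subset K -> K \subset G -> (#|G : H| <= #|G : K|)%N -> H :=: K.
Proof.
move=> sHK sKG le_GH_GK; apply/eqP; rewrite eqEsubset sHK -indexg_eq1 /=.
rewrite eqn_leq indexg_gt0 andbT -(leq_pmul2l (indexg_gt0 G K)).
by rewrite Lagrange_index // muln1.
Qed.

Lemma quotient_sub_center :
  H \subset G -> [~: H, G] \subset N -> (H / N \subset 'Z(G / N))%g.
Proof. by move=> sHG sHGN; rewrite subsetI quotientS ?quotient_cents2r. Qed.

Lemma quotient_nonabelian :
  N <| G -> ~~ ([~: G, G] \subset N) -> ~~ abelian (G / N).
Proof. by move=> /normal_norm nNG; apply: contra => /(der1_min nNG). Qed.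

End Subgroups.

Theorem mainTheorem11 (gT : finGroupType) (G N : {group gT}) (i : Iirr G) :
  GVZ G -> size (cd G) = 2%N -> (N <| G)%g -> ~~ ([~: G, G] \subset N)%g ->
  nonlinear_irr i -> ([~: ('Z('chi[G]_i))%CF, G] \subset N)%g ->
  ('Z(G / N) = ('Z('chi[G]_i))%CF / N)%g.
Proof.
move=> [_ GVZ_G] cd2 nsNG nsG'N nl_i sZGN.
set Z := ('Z('chi_i))%CF.
have sZG : Z \subset G := cfcenter_sub _.
have [j nl_j] := nonabelian_exists_nonlinear_irr (quotient_nonabelian nsNG nsG'N).
have chi_j1 : 'chi_j 1%g = 'chi_i 1%g.
  have nl_modj : nonlinear_irr (mod_Iirr j) by rewrite /nonlinear_irr mod_IirrE ?cfMod1.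
  by rewrite -(cd_size2_nonlinear_eq cd2 nl_i nl_modj) mod_IirrE ?cfMod1.
have le_ZN_Z : (#|G / N : Z / N| <= #|G : Z|)%N.
  by rewrite dvdn_leq ?indexg_gt0 // index_morphim //= subIset // (normal_norm nsNG).
have le_Z_center : (#|G : Z| <= #|G / N : 'Z(G / N)|)%N.
  rewrite -(ler_nat algC) -(irr1_sqr_index_cfcenter (GVZ_G i)) -chi_j1.
  exact: irr1_sqr_le_index_center.
apply/esym/index_leq_sub_eq; first exact: quotient_sub_center sZG sZGN.
  exact: center_sub.
exact: leq_trans le_Z_center.
Qed.
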